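(* In a hierarchical tensor factorization with mode tree $\mathcal T$, for any $\nu\in\mathrm{int}(\mathcal T)$: $$\|\mathcal W^{(\nu,:)}\|\le\|W^{(\nu)}\|\cdot\prod_{\nu_c\in C(\nu)}\|\mathcal W^{(\nu_c,:)}\|.$$
   Context: Fix $N\in\mathbb N$, $D_1,\dots,D_N\in\mathbb N$; $[K]:=\{1,\dots,K\}$; norms are Frobenius norms; $\otimes$ the tensor product. A mode tree $\mathcal T$ over $[N]$ is a rooted tree whose nodes are labeled by subsets of $[N]$, with exactly $N$ leaves labeled $\{1\},\dots,\{N\}$, and where each interior node's label is the union of its children's labels; nodes are identified with labels, root $[N]$, $\mathrm{int}(\mathcal T)$ interior nodes, $Pa(\nu)$ parent, $C(\nu)$ children (fixed order). A hierarchical tensor factorization has $R_\nu\in\mathbb N$ ($\nu\in\mathrm{int}(\mathcal T)$), $R_{Pa([N])}:=1$, $R_{\{n\}}:=D_n$, weight matrices $W^{(\nu)}\in\mathbb R^{R_\nu\times R_{Pa(\nu)}}$. Intermediate tensors: $\mathcal W^{(\{n\},r)}:=W^{(\{n\})}_{:,r}$; for $\nu\in\mathrm{int}(\mathcal T)\setminus\{[N]\}$ (leaves to root), $r\in[R_{Pa(\nu)}]$: $\mathcal W^{(\nu,r)}:=\pi_\nu\big(\sum_{r'=1}^{R_\nu}W^{(\nu)}_{r',r}\bigotimes_{\nu_c\in C(\nu)}\mathcal W^{(\nu_c,r')}\big)$; end tensor $\mathcal W_H:=\pi_{[N]}\big(\sum_{r'=1}^{R_{[N]}}W^{([N])}_{r',1}\bigotimes_{\nu_c\in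 C([N])}\mathcal W^{(\nu_c,r')}\big)$, where $\pi_\nu$ permutes modes (ordered by children, each child's elements ascending) into ascending order of the elements of $\nu$; by convention $\mathcal W^{([N],1)}:=\mathcal W_H$. For $\nu\in\mathcal T$, $\mathcal W^{(\nu,:)}$ is the tensor obtained by stacking $(\mathcal W^{(\nu,r)})_{r=1}^{R_{Pa(\nu)}}$ along an additional last mode, i.e. $\mathcal W^{(\nu,:)}_{:,\dots,:,r}=\mathcal W^{(\nu,r)}$. *)

From HB Require Import structures.
From mathcomp Require Import all_boot all_order all_algebra.
From mathcomp Require Import reals.
From Stdlib Require List.

Set Implicit Arguments.
Unset Strict Implicit.
Unset Printing Implicit Defensive.

Import Order.TTheory GRing.Theory Num.Theory.
Local Open Scope ring_scope.

(* Modes are 'I_N (mode n+1 of the paper is the ordinal n). *)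
Section ModeTree.
Variable N : nat.

Inductive mtree := MLeaf of 'I_N | MNode of seq mtree.

Fixpoint label (t : mtree) : {set 'I_N} :=
  match t with
  | MLeaf n => [set n]
  | MNode cs =>
      (fix labs (cs : seq mtree) : {set 'I_N} :=
         match cs with [::] => set0 | c :: cs' => label c :|: labs cs' end) cs
  end.

Definition children (t : mtree) : seq mtree :=
  match t with MLeaf _ => [::] | MNode cs => cs end.

Definition is_interior (t : mtree) : bool :=
  match t with MLeaf _ => false | MNode _ => true end.

Fixpoint leaves (t : mtree) : seq 'I_N :=
  match t with
  | MLeaf n => [:: n]
  | MNode cs =>
      (fix ls (cs : seq mtree) : seq 'I_N :=
         match cs with [::] => [::] | c :: cs' => leaves c ++ ls cs' end) cs
  end.

Fixpoint subtrees (t : mtree) : seq mtree :=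
  t :: match t with
       | MLeaf _ => [::]
       | MNode cs =>
           (fix ss (cs : seq mtree) : seq mtree :=
              match cs with [::] => [::] | c :: cs' => subtrees c ++ ss cs' end) cs
       end.

(* A mode tree over [N]: exactly N leaves, labelled {1},...,{N} (each once);
   interior nodes have at least one child; nodes are identified with their
   labels (labels are pairwise distinct). *)
Definition is_mode_tree (T : mtree) : Prop :=
  [/\ perm_eq (leaves T) (enum 'I_N),
      (forall t, List.In t (subtrees T) -> is_interior t -> children t <> [::])
    & uniq (map label (subtrees T))].

Section Factorization.
Variable R : realType.
(* D n = D_{n+1}; Rk nu = R_nu for interior nu; W nu = W^{(nu)}, as a
   0-indexed array: W nu r' r is the entry (r'+1, r+1). *)
Variables (D : 'I_N -> nat) (Rk : {set 'I_N} -> nat)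
          (W : {set 'I_N} -> nat -> nat -> R).

Definition rank (t : mtree) : nat :=
  match t with MLeaf n => D n | MNode _ => Rk (label t) end.

(* all nodes together with R_{Pa(nu)} (R_{Pa([N])} := 1) *)
Fixpoint nodes_pa (t : mtree) (p : nat) : seq (mtree * nat) :=
  (t, p) :: match t with
            | MLeaf _ => [::]
            | MNode cs =>
                (fix ns (cs : seq mtree) : seq (mtree * nat) :=
                   match cs with
                   | [::] => [::]
                   | c :: cs' => nodes_pa c (Rk (label t)) ++ ns cs'
                   end) cs
            end.

Definition nodes (T : mtree) : seq (mtree * nat) := nodes_pa T 1.

(* A tensor whose modes are
   the elements of nu is represented with modes labelled by their names:
   it is a function of a multi-index i : 'I_N -> nat, of which only the
   coordinates i n, n \in nu, are read.  Thus the mode permutation pi_nu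
   (which only sorts the modes into ascending order) is the identity in
   this representation. *)
Fixpoint tens (t : mtree) : ('I_N -> nat) -> nat -> R :=
  match t with
  | MLeaf n => fun i r => W [set n] (i n) r
  | MNode cs => fun i r =>
      \sum_(r' < Rk (label t))
        W (label t) r' r *
        (fix pr (cs : seq mtree) : R :=
           match cs with [::] => 1 | c :: cs' => tens c i r' * pr cs' end) cs
  end.

Definition idx (nu : {set 'I_N}) :=
  {dffun forall x : {x : 'I_N | x \in nu}, 'I_(D (val x))}.

Definition ext (nu : {set 'I_N}) (j : idx nu) : 'I_N -> nat :=
  fun n => match (insub n : option {x : 'I_N | x \in nu}) with
           | Some x => nat_of_ord (j x)
           | None => 0%N
           end.

Definition stack_norm (nu : {set 'I_N}) (K : nat)
  (X : ('I_N -> nat) -> nat -> R) : R :=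
  Num.sqrt (\sum_(j : idx nu) \sum_(r < K) X (ext j) r ^+ 2).

Definition mat_norm (m k : nat) (M : nat -> nat -> R) : R :=
  Num.sqrt (\sum_(a < m) \sum_(b < k) M a b ^+ 2).

End Factorization.
End ModeTree.

From HB Require Import structures.
From mathcomp Require Import all_boot all_order all_algebra.
From mathcomp Require Import reals.
From mathcomp Require Import ring lra.
From Stdlib Require List.
Import Order.TTheory GRing.Theory Num.Theory.
Local Open Scope ring_scope.
Set Implicit Arguments.
Unset Strict Implicit.
Unset Printing Implicit Defensive.

(* Write the node tensor as the contraction of W^(nu) with the tensor product
   P(j, r') = prod_c W^(c, r')(j restricted to c).  Cauchy-Schwarz in r' bounds
   ||W^(nu,:)||^2 by ||W^(nu)||^2 * sum_r' ||P(., r')||^2.  The children's labels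
   are pairwise disjoint, so j splits into independent restrictions and
   ||P(., r')||^2 = prod_c ||W^(c, r')||^2.  Finally, for nonnegative a_c and at
   least one child, sum_r' prod_c a_c(r') <= prod_c sum_r' a_c(r'). *)

Section ModeTrees.
Variable N : nat.
Implicit Types (t : mtree N) (cs : seq (mtree N)).

Fixpoint mtree_nested_ind (P : mtree N -> Prop) (PL : forall n, P (MLeaf n))
    (PN : forall cs, (forall c, List.In c cs -> P c) -> P (MNode cs)) t : P t :=
  match t with
  | MLeaf n => PL n
  | MNode cs => PN cs ((fix In_ind cs : forall c, List.In c cs -> P c :=
       match cs with
       | [::] => fun c cin => False_ind _ cin
       | c0 :: cs' => fun c cin =>
           match cin with
           | or_introl e => eq_ind c0 P (mtree_nested_ind PL PN c0) c e
           | or_intror cin' => In_ind cs' c cin'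
           end
       end) cs)
  end.

Lemma label_MNode cs : label (MNode cs) = \bigcup_(c <- cs) label c.
Proof. by elim: cs => [|c cs IH] /=; rewrite ?big_nil ?big_cons // -IH. Qed.

Lemma leaves_MNode cs : leaves (MNode cs) = flatten (map (@leaves N) cs).
Proof. by elim: cs => [|c cs IH] //=; rewrite -IH. Qed.

Lemma subtrees_MNode cs :
  subtrees (MNode cs) = MNode cs :: flatten (map (@subtrees N) cs).
Proof. by elim: cs => [|c cs IH] //=; case: IH => ->. Qed.

Lemma nodes_pa_MNode (Rk : {set 'I_N} -> nat) cs p :
  nodes_pa Rk (MNode cs) p =
  (MNode cs, p) :: flatten (map (nodes_pa Rk ^~ (Rk (label (MNode cs)))) cs).
Proof.
rewrite [LHS]/=; congr (_ :: _); move: (Rk _) => K.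
by elim: cs => [|c cs IH] //=; rewrite IH.
Qed.

Lemma mem_label t x : (x \in label t) = (x \in leaves t).
Proof.
elim/mtree_nested_ind: t => [n|cs IH]; first by rewrite inE mem_seq1.
rewrite label_MNode leaves_MNode.
elim: cs IH => [|c cs IHcs] IH; first by rewrite big_nil inE.
rewrite big_cons inE mem_cat IH /=; last by left.
by rewrite IHcs // => c' c'in; apply: IH; right.
Qed.

Lemma map_fst_nodes_pa (Rk : {set 'I_N} -> nat) t p :
  map fst (nodes_pa Rk t p) = subtrees t.
Proof.
elim/mtree_nested_ind: t p => [//|cs IH] p.
rewrite nodes_pa_MNode subtrees_MNode /= map_flatten -map_comp; congr (_ :: _).
move: (Rk _) => K; elim: cs IH => [//|c cs IHcs] IH /=.
by rewrite IH /=; [rewrite IHcs // => c' c'in; apply: IH; right | left].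
Qed.

Lemma In_flatten_map (T U : Type) (f : U -> seq T) (s : seq U) x :
  List.In x (flatten (map f s)) -> exists2 y, List.In y s & List.In x (f y).
Proof.
elim: s => [//|y s IH] /= /List.in_app_iff [xfy | /IH [z zs xfz]].
  by exists y; [left|].
by exists z; [right|].
Qed.

Lemma uniq_leaves_subtree T t :
  uniq (leaves T) -> List.In t (subtrees T) -> uniq (leaves t).
Proof.
elim/mtree_nested_ind: T => [n|cs IH] uT; first by case=> // <-.
rewrite subtrees_MNode => -[<- // | tcs].
have [c cin tc] := In_flatten_map tcs.
apply: (IH c cin) tc; move: uT; rewrite leaves_MNode.
elim: cs cin {IH tcs} => [//|c' cs IHcs] /= [-> | cin]; rewrite cat_uniq.
  by case/and3P.
by case/and3P=> _ _; apply: IHcs.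
Qed.

Lemma pairwise_disjoint_label cs :
  uniq (leaves (MNode cs)) ->
  pairwise (fun c c' => [disjoint label c & label c']) cs.
Proof.
rewrite leaves_MNode; elim: cs => [//|c cs IH].
rewrite pairwise_cons /= cat_uniq => /and3P [_ hc /IH ->]; rewrite andbT.
elim: cs {IH} hc => [//|c' cs IHcs] /=; rewrite has_cat => /norP [hc' /IHcs ->].
rewrite andbT disjoint_sym disjoint_subset; apply/subsetP => x.
rewrite inE !mem_label => xc'; apply: contraNN hc' => xc.
by apply/hasP; exists x.
Qed.

End ModeTrees.

Section RealInequalities.
Variable R : realFieldType.

Lemma sum2_sqr_ge0 (I J : finType) (F : I -> J -> R) : 0 <= \sum_i \sum_j F i j ^+ 2.
Proof. by rewrite sumr_ge0 // => i _; rewrite sumr_ge0 // => j _; rewrite sqr_ge0. Qed.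

Lemma sum_mul_sqr_le (I : finType) (a b : I -> R) :
  (\sum_i a i * b i) ^+ 2 <= (\sum_i a i ^+ 2) * (\sum_i b i ^+ 2).
Proof.
pose S := \sum_i \sum_j a i ^+ 2 * b j ^+ 2.
pose X := \sum_i \sum_j a i * b i * (a j * b j).
have S_swap : \sum_i \sum_j a j ^+ 2 * b i ^+ 2 = S by rewrite exchange_big.
have lagrange : \sum_i \sum_j (a i * b j - a j * b i) ^+ 2 = S + S - 2 * X.
  rewrite -{2}S_swap mulr_sumr -!big_split -sumrB; apply: eq_bigr => i _.
  rewrite mulr_sumr -!big_split -sumrB; apply: eq_bigr => j _ /=; ring.
have := sum2_sqr_ge0 (fun i j => a i * b j - a j * b i).
by rewrite lagrange expr2 !big_distrlr /= -/S -/X; lra.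
Qed.

Lemma sum_sqr_contraction_le (I J K : finType) (M : K -> J -> R) (P : I -> K -> R) :
  \sum_i \sum_j (\sum_k M k j * P i k) ^+ 2 <=
  (\sum_k \sum_j M k j ^+ 2) * (\sum_i \sum_k P i k ^+ 2).
Proof.
rewrite [X in _ <= X * _]exchange_big mulr_sumr; apply: ler_sum => i _.
by rewrite mulr_suml; apply: ler_sum => j _; apply: sum_mul_sqr_le.
Qed.

Lemma sum_prod_le_prod_sum (I : finType) (T : Type) (s : seq T) (F : T -> I -> R) :
  s <> [::] -> (forall c k, 0 <= F c k) ->
  \sum_k \prod_(c <- s) F c k <= \prod_(c <- s) \sum_k F c k.
Proof.
move=> + F_ge0; elim: s => [//|c s IH] _.
case: s IH => [_ | c' s IH].
  by rewrite big_seq1; under eq_bigr do rewrite big_seq1.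
set s' := c' :: s; rewrite big_cons.
apply: (@le_trans _ _ (\sum_k F c k * \sum_k' \prod_(d <- s') F d k')).
  apply: ler_sum => k _; rewrite big_cons ler_wpM2l //.
  by rewrite (bigD1 k) //= lerDl sumr_ge0 // => *; rewrite prodr_ge0.
by rewrite -mulr_suml ler_wpM2l ?sumr_ge0 // IH.
Qed.

End RealInequalities.

Lemma sqrtr_prod (R : rcfType) (T : Type) (s : seq T) (F : T -> R) :
  (forall c, 0 <= F c) -> Num.sqrt (\prod_(c <- s) F c) = \prod_(c <- s) Num.sqrt (F c).
Proof.
by move=> F_ge0; elim: s => [|c s IH]; rewrite ?big_nil ?sqrtr1 // !big_cons sqrtrM // IH.
Qed.

Section MultiIndices.
Variables (N : nat) (D : 'I_N -> nat).
Implicit Types (S A B : {set 'I_N}) (i : 'I_N -> nat).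

Definition local_on (T : Type) S (F : ('I_N -> nat) -> T) :=
  forall i i', {in S, i =1 i'} -> F i = F i'.

Lemma ext_val S (j : idx D S) x : ext j (val x) = j x.
Proof. by rewrite /ext valK. Qed.

Lemma ext_notin S (j : idx D S) n : n \notin S -> ext j n = 0%N.
Proof. by move=> nS; rewrite /ext insubN. Qed.

Lemma ext_lt S (j : idx D S) n : n \in S -> (ext j n < D n)%N.
Proof. by move=> nS; rewrite -[n]/(val (Sub n nS : {x | x \in S})) ext_val. Qed.

Lemma ext_inj S (j j' : idx D S) : ext j =1 ext j' -> j = j'.
Proof. by move=> e; apply/ffunP => x; apply: val_inj; rewrite /= -!ext_val e. Qed.

Definition idx_of S i (iS : forall n, n \in S -> (i n < D n)%N) : idx D S :=
  [ffun x => Ordinal (iS (val x) (valP x))].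

Lemma ext_idx_of S i (iS : forall n, n \in S -> (i n < D n)%N) n :
  ext (idx_of iS) n = if n \in S then i n else 0%N.
Proof.
case: (boolP (n \in S)) => nS; last exact: ext_notin.
by rewrite -[n]/(val (Sub n nS : {x | x \in S})) ext_val ffunE.
Qed.

Lemma sum_idx_setU_mul (R : comPzSemiRingType) A B (F G : ('I_N -> nat) -> R) :
  [disjoint A & B] -> local_on A F -> local_on B G ->
  \sum_(j : idx D (A :|: B)) F (ext j) * G (ext j) =
  (\sum_(a : idx D A) F (ext a)) * (\sum_(b : idx D B) G (ext b)).
Proof.
move=> disjAB locF locG.
have joinP (ab : idx D A * idx D B) n : n \in A :|: B ->
    ((if n \in A then ext ab.1 n else ext ab.2 n) < D n)%N.
  by rewrite inE; case: ifP => [nA _ | _ nB]; apply: ext_lt.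
have restrP S (j : idx D (A :|: B)) n :
    S \subset A :|: B -> n \in S -> (ext j n < D n)%N.
  by move=> /subsetP sS /sS; apply: ext_lt.
pose join ab := idx_of (joinP ab).
pose split j :=
  (idx_of (restrP A j ^~ (subsetUl A B)), idx_of (restrP B j ^~ (subsetUr A B))).
have ext_join ab n : ext (join ab) n = if n \in A then ext ab.1 n else ext ab.2 n.
  rewrite ext_idx_of inE; have [//|nA] /= := boolP (n \in A).
  by have [//|nB] := boolP (n \in B); rewrite ext_notin.
have joinK : cancel split join.
  move=> j; apply: ext_inj => n; rewrite ext_join !ext_idx_of.
  have [//|nA] := boolP (n \in A); have [//|nB] := boolP (n \in B).
  by rewrite ext_notin // inE negb_or nA nB.
have splitK : cancel join split.
  case=> a b; congr pair; apply: ext_inj => n; rewrite ext_idx_of ext_join /=.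
    by have [//|nA] := boolP (n \in A); rewrite ext_notin.
  have [nB|nB] := boolP (n \in B); first by rewrite (disjointFl disjAB nB).
  by rewrite ext_notin.
rewrite (reindex join) /=; last by exists split => ? _; [apply: splitK | apply: joinK].
rewrite big_distrlr pair_big /=; apply: eq_bigr => -[a b] _ /=.
congr (_ * _); [apply: locF => n nA | apply: locG => n nB]; rewrite ext_join /= ?nA //.
by rewrite (disjointFl disjAB nB).
Qed.

Lemma local_on_prod (R : comPzSemiRingType) (T : Type) (s : seq T)
    (S : T -> {set 'I_N}) (F : T -> ('I_N -> nat) -> R) :
  (forall c, List.In c s -> local_on (S c) (F c)) ->
  local_on (\bigcup_(c <- s) S c) (fun i => \prod_(c <- s) F c i).
Proof.
elim: s => [|c s IH] locF i i' e; rewrite ?big_nil // !big_cons.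
congr (_ * _).
  by apply: (locF c (or_introl erefl)) => n nc; apply: e; rewrite big_cons inE nc.
apply: IH => [c' c's | n ns]; first by apply: locF; right.
by apply: e; rewrite big_cons inE ns orbT.
Qed.

Lemma sum_idx_bigcup_prod (R : comPzSemiRingType) (T : Type) (s : seq T)
    (S : T -> {set 'I_N}) (F : T -> ('I_N -> nat) -> R) U :
  U = \bigcup_(c <- s) S c ->
  pairwise (fun c c' => [disjoint S c & S c']) s ->
  (forall c, List.In c s -> local_on (S c) (F c)) ->
  \sum_(j : idx D U) \prod_(c <- s) F c (ext j) =
  \prod_(c <- s) \sum_(j : idx D (S c)) F c (ext j).
Proof.
elim: s U => [|c s IH] U hU disj locF.
  rewrite big_nil in hU; subst U; rewrite big_nil; under eq_bigr do rewrite big_nil.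
  have j0P n : n \in set0 -> (0 < D n)%N by rewrite inE.
  rewrite (bigD1 (idx_of j0P)) //= big1 ?addr0 // => j.
  suff -> : j = idx_of j0P by rewrite eqxx.
  by apply: ext_inj => n; rewrite !ext_notin ?inE.
move: disj; rewrite pairwise_cons => /andP [disj_c disj_s].
have locF_s c' : List.In c' s -> local_on (S c') (F c') by move=> ?; apply: locF; right.
rewrite big_cons in hU; subst U; under [LHS]eq_bigr do rewrite big_cons.
rewrite big_cons -(IH _ erefl) //.
apply: (sum_idx_setU_mul (F := F c) (G := fun i => \prod_(c' <- s) F c' i)).
- rewrite disjoint_sym disjoints_subset.
  elim: s {IH locF locF_s disj_s} disj_c => [|c' s IHs] /=.
    by rewrite big_nil sub0set.
  by rewrite big_cons subUset -disjoints_subset disjoint_sym => /andP [-> /IHs].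
- by apply: locF; left.
- exact: local_on_prod.
Qed.

End MultiIndices.

Section Tensors.
Variables (R : realType) (N : nat) (D : 'I_N -> nat) (Rk : {set 'I_N} -> nat)
  (W : {set 'I_N} -> nat -> nat -> R).
Local Notation tens := (tens Rk W).

Lemma tens_MNode (cs : seq (mtree N)) i r :
  tens (MNode cs) i r = \sum_(r' < Rk (label (MNode cs)))
    W (label (MNode cs)) r' r * \prod_(c <- cs) tens c i r'.
Proof.
apply: eq_bigr => r' _; congr (_ * _); move: (nat_of_ord r') => k {r'}.
by elim: cs => [|c cs IH] /=; rewrite ?big_nil ?big_cons // IH.
Qed.

Lemma local_on_tens (t : mtree N) r : local_on (label t) (tens t ^~ r).
Proof.
elim/mtree_nested_ind: t r => [n|cs IH] r i i' e; first by rewrite /= e ?inE.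
rewrite !tens_MNode; apply: eq_bigr => r' _; congr (_ * _).
apply: (local_on_prod (S := @label N) (F := fun c i => tens c i r')) => [c cin|n n_cs].
  exact: IH.
by apply: e; rewrite label_MNode.
Qed.

Lemma sum_sqr_tens_MNode_le (cs : seq (mtree N)) (pa : nat) :
  cs <> [::] -> uniq (leaves (MNode cs)) ->
  \sum_(j : idx D (label (MNode cs))) \sum_(r < pa) tens (MNode cs) (ext j) r ^+ 2 <=
  (\sum_(k < Rk (label (MNode cs))) \sum_(r < pa) W (label (MNode cs)) k r ^+ 2) *
  \prod_(c <- cs) \sum_(j : idx D (label c))
                    \sum_(k < Rk (label (MNode cs))) tens c (ext j) k ^+ 2.
Proof.
move=> cs_neq0 uniq_cs; pose K := Rk (label (MNode cs)).
pose P (j : idx D (label (MNode cs))) (k : 'I_K) := \prod_(c <- cs) tens c (ext j) k.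
have split_modes (k : 'I_K) :
    \sum_(j : idx D (label (MNode cs))) P j k ^+ 2 =
    \prod_(c <- cs) \sum_(j : idx D (label c)) tens c (ext j) k ^+ 2.
  under [LHS]eq_bigr do rewrite /P -prodrXl.
  apply: (sum_idx_bigcup_prod D (F := fun c i => tens c i k ^+ 2) (label_MNode cs)).
    exact: pairwise_disjoint_label.
  by move=> c _ i i' e /=; congr (_ ^+ 2); apply: local_on_tens e.
under [X in X <= _]eq_bigr do under eq_bigr do rewrite tens_MNode.
apply: le_trans (sum_sqr_contraction_le (fun (k : 'I_K) (r : 'I_pa) => W _ k r) P) _.
rewrite ler_wpM2l ?sum2_sqr_ge0 // exchange_big.
under eq_bigr do rewrite split_modes.
apply: le_trans (sum_prod_le_prod_sum cs_neq0 _) _.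
  by move=> c k; rewrite sumr_ge0 // => j _; rewrite sqr_ge0.
by under [X in _ <= X]eq_bigr do rewrite exchange_big.
Qed.

End Tensors.

Theorem lemma8 (R : realType) (N : nat) (D : 'I_N -> nat)
  (Rk : {set 'I_N} -> nat) (W : {set 'I_N} -> nat -> nat -> R)
  (T : mtree N) (hT : is_mode_tree T)
  (hD : forall n : 'I_N, (0 < D n)%N)
  (hRk : forall t : mtree N, List.In t (subtrees T) -> is_interior t ->
         (0 < Rk (label t))%N)
  (nu : mtree N) (pa : nat) (hnu : List.In (nu, pa) (nodes Rk T))
  (hint : is_interior nu) :
  stack_norm D (label nu) pa (tens Rk W nu) <=
  mat_norm (rank D Rk nu) pa (W (label nu)) *
  \prod_(c <- children nu)
     stack_norm D (label c) (rank D Rk nu) (tens Rk W c).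
Proof.
case: nu hnu hint => [//|cs] hnu _.
have cs_in_T : List.In (MNode cs) (subtrees T).
  by rewrite -(map_fst_nodes_pa Rk T 1); apply: (List.in_map fst _ _ hnu).
case: hT => leaves_T nonempty_nodes _.
have uniq_cs : uniq (leaves (MNode cs)).
  by apply: (uniq_leaves_subtree _ cs_in_T); rewrite (perm_uniq leaves_T) enum_uniq.
rewrite /stack_norm /mat_norm /= -sqrtr_prod => [|c]; last exact: sum2_sqr_ge0.
rewrite -sqrtrM ?sum2_sqr_ge0 // ler_sqrt ?mulr_ge0 ?sum2_sqr_ge0 ?prodr_ge0 //.
  exact: sum_sqr_tens_MNode_le (nonempty_nodes _ cs_in_T isT) uniq_cs.
by move=> c _; apply: sum2_sqr_ge0.
Qed.
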